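(* Let $m\in\mathbb{Z}_{\ge0}$ and, in $\mathbb{R}^{2m+6}$, let $\rho=\frac12\sum_re_r$, $v_S=\sum_{r\in S}e_r$ ($S\subset\{0,\ldots,2m+5\}$, $|S|=m+1$), $w_{ij}=\rho-e_i-e_j$, $P^{(m)}=\mathrm{conv}\{v_S,w_{ij}\}$, $P_{\rm I}=\mathrm{conv}\{v_S\}$, $P_{\rm II}=\mathrm{conv}(\{v_S:S\subset\{1,\ldots,2m+5\}\}\cup\{w_{0j}:1\le j\le 2m+5\})$, $P_{\rm III}=\mathrm{conv}(\{v_S:S\subset\{3,\ldots,2m+5\}\}\cup\{w_{ij}:0\le i<j\le 2\})$. Then every face of $P^{(m)}$ is a face of $P_{\rm I}$, of $\sigma(P_{\rm II})$ or of $\sigma(P_{\rm III})$ for some coordinate permutation $\sigma\in S_{2m+6}$, except for the interior of $P^{(m)}$ and the images under coordinate permutations of the facet of $P^{(m)}$ given by $\alpha_0+\alpha_1+\alpha_2+\alpha_3=0$. *)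

From HB Require Import structures.
From mathcomp Require Import all_boot all_order all_algebra all_fingroup.
From mathcomp Require Import all_classical all_reals.

Import Order.TTheory GRing.Theory Num.Theory.
Local Open Scope ring_scope.
Local Open Scope classical_set_scope.

Definition conv {R : realType} {n : nat} (A : set 'rV[R]_n) : set 'rV[R]_n :=
  [set x | exists (k : nat) (l : 'I_k -> R) (p : 'I_k -> 'rV[R]_n),
     (forall i, A (p i)) /\ (forall i, 0 <= l i) /\
     \sum_i l i = 1 /\ x = \sum_i l i *: p i].

Definition dotv {R : realType} {n : nat} (c x : 'rV[R]_n) : R :=
  \sum_i c ord0 i * x ord0 i.

(* F is a face of the polytope P: the set of maximizers on P of some linear
   functional (c = 0 gives P itself). For polytopes all faces are exposed. *)
Definition is_face {R : realType} {n : nat} (P F : set 'rV[R]_n) : Prop :=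
  exists c : 'rV[R]_n,
    F = [set x | P x /\ forall y, P y -> dotv c y <= dotv c x].

Definition permv {R : realType} {n : nat} (s : 'S_n) (x : 'rV[R]_n) : 'rV[R]_n :=
  \row_i x ord0 (s i).

Definition N (m : nat) : nat := (m.*2 + 5).+1.
Definition idx (m k : nat) : 'I_(N m) := @inord (m.*2 + 5) k.

Definition ev (R : realType) {n : nat} (r : 'I_n) : 'rV[R]_n := delta_mx ord0 r.
Definition rho (R : realType) (n : nat) : 'rV[R]_n := \sum_r 2^-1 *: ev R r.
Definition vS (R : realType) {n : nat} (S : {set 'I_n}) : 'rV[R]_n :=
  \sum_(r in S) ev R r.
Definition w (R : realType) {n : nat} (i j : 'I_n) : 'rV[R]_n :=
  rho R n - ev R i - ev R j.


Definition Pm (R : realType) (m : nat) : set 'rV[R]_(N m) :=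
  conv [set x | (exists S : {set 'I_(N m)}, #|S| = m.+1 /\ x = vS R S)
             \/ (exists i j : 'I_(N m), (i < j)%N /\ x = w R i j)].

Definition PI (R : realType) (m : nat) : set 'rV[R]_(N m) :=
  conv [set x | exists S : {set 'I_(N m)}, #|S| = m.+1 /\ x = vS R S].

Definition PII (R : realType) (m : nat) : set 'rV[R]_(N m) :=
  conv [set x | (exists S : {set 'I_(N m)}, #|S| = m.+1 /\
                   (forall r, r \in S -> (1 <= r)%N) /\ x = vS R S)
             \/ (exists j : 'I_(N m), (1 <= j)%N /\ x = w R (idx m 0) j)].

Definition PIII (R : realType) (m : nat) : set 'rV[R]_(N m) :=
  conv [set x | (exists S : {set 'I_(N m)}, #|S| = m.+1 /\
                   (forall r, r \in S -> (3 <= r)%N) /\ x = vS R S)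
             \/ (exists i j : 'I_(N m), (i < j)%N /\ (j <= 2)%N /\ x = w R i j)].

Definition F0 (R : realType) (m : nat) : set 'rV[R]_(N m) :=
  [set x | Pm R m x /\
     x ord0 (idx m 0) + x ord0 (idx m 1) + x ord0 (idx m 2) + x ord0 (idx m 3) = 0].

From HB Require Import structures.
From mathcomp Require Import all_boot all_order all_algebra all_fingroup.
From mathcomp Require Import all_classical all_reals.
From mathcomp Require Import zify ring lra.
Import Order.TTheory GRing.Theory Num.Theory.
Local Open Scope ring_scope.
Local Open Scope classical_set_scope.

(* Permuting coordinates maps P^(m) and P_I to themselves, so we may take the
   functional c with nondecreasing coordinates c_0 <= c_1 <= ...  Over the points
   w_ij its maximum is W = c(w_01).  If some v_S beats W, only vertices v_S are
   maximal and the face is a face of P_I.  Otherwise w_01 is maximal, and the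
   maximal vertices are read off from c_0, ..., c_3: when c_0 < c_2 they are the
   w_0j and the v_S with 0 outside S (a face of P_II); when c_0 = c_2 < c_3 they
   are the w_ij with i, j <= 2 and the v_S avoiding 0, 1, 2 (a face of P_III).
   When c_0 = c_3, every (m+1)-subset of the other 2m+2 coordinates has c-weight
   at most W while all of them weigh 2W; this forces c to be constant there, so
   the face is P^(m) itself or the facet alpha_0 + ... + alpha_3 = 0. *)

Definition face {R : realType} {n : nat} (P : set 'rV[R]_n) (c : 'rV[R]_n) :=
  [set x | P x /\ forall y, P y -> dotv c y <= dotv c x].

Section Convex.
Context {R : realType} {n : nat}.
Implicit Types (A B : set 'rV[R]_n) (c x g : 'rV[R]_n).

Lemma dotv_sum c k (l : 'I_k -> R) (p : 'I_k -> 'rV[R]_n) :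
  dotv c (\sum_i l i *: p i) = \sum_i l i * dotv c (p i).
Proof.
rewrite /dotv; under eq_bigr do rewrite summxE big_distrr.
rewrite exchange_big /=; apply: eq_bigr => i _; rewrite big_distrr /=.
by apply: eq_bigr => j _; rewrite mxE mulrCA.
Qed.

Lemma conv_self A x : A x -> conv A x.
Proof.
move=> Ax; exists 1%N, (fun _ => 1), (fun _ => x).
by rewrite !big_ord1 scale1r.
Qed.

Lemma conv_sub {A B} : A `<=` B -> conv A `<=` conv B.
Proof. by move=> AB x [k [l [p [Ap hl]]]]; exists k, l, p; split=> // i; apply: AB. Qed.

Lemma conv_le {A c M} : (forall g, A g -> dotv c g <= M) ->
  forall {x}, conv A x -> dotv c x <= M.
Proof.
move=> AM x [k [l [p [Ap [l_ge0 [l1 ->]]]]]].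
rewrite dotv_sum -[M]mul1r -l1 big_distrl /=.
by apply: ler_sum => i _; apply: ler_wpM2l => //; apply: AM.
Qed.

Lemma conv_eq {A c M} : (forall g, A g -> dotv c g = M) ->
  forall {x}, conv A x -> dotv c x = M.
Proof.
move=> AM x [k [l [p [Ap [l_ge0 [l1 ->]]]]]].
rewrite dotv_sum -[M]mul1r -l1 big_distrl /=.
by apply: eq_bigr => i _; rewrite AM.
Qed.

(* A convex combination attains the maximum only if every point carrying
   positive weight does; the points of weight zero are replaced by [g0]. *)
Lemma conv_argmax_sub {A B c g0} :
  B g0 -> (forall g, A g -> dotv c g <= dotv c g0) ->
  (forall g, A g -> dotv c g = dotv c g0 -> B g) ->
  forall {x}, conv A x -> dotv c x = dotv c g0 -> conv B x.
Proof.
move=> Bg0 AM AB x [k [l [p [Ap [l_ge0 [l1 xE]]]]]] xM.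
have gap_ge0 i : 0 <= l i * (dotv c g0 - dotv c (p i)).
  by rewrite mulr_ge0 // subr_ge0 AM.
have gap0 : \sum_i l i * (dotv c g0 - dotv c (p i)) = 0.
  under eq_bigr do rewrite mulrBr.
  by rewrite sumrB -big_distrl /= l1 mul1r -dotv_sum -xE xM subrr.
have pM i : l i != 0 -> dotv c (p i) = dotv c g0.
  move=> li0; have /eqP := psumr_eq0P (fun i _ => gap_ge0 i) gap0 (i := i) isT.
  by rewrite mulf_eq0 (negbTE li0) subr_eq0 => /eqP.
exists k, l, (fun i => if l i == 0 then g0 else p i); split.
  by move=> i; case: eqP => // /eqP li0; apply: AB; rewrite ?pM.
do 2!split=> //; rewrite xE; apply: eq_bigr => i _.
by case: eqP => // ->; rewrite !scale0r.
Qed.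

Lemma face_conv_argmax {A c g0} : A g0 -> (forall g, A g -> dotv c g <= dotv c g0) ->
  face (conv A) c = [set x | conv A x /\ dotv c x = dotv c g0].
Proof.
move=> Ag0 AM; apply/seteqP; split => x /= [Ax xM]; split=> //.
  apply/le_anti; rewrite (conv_le AM Ax) xM //; exact: conv_self.
by move=> y Ay; rewrite xM; apply: conv_le Ay.
Qed.

Lemma face_conv_sub {A B c} g0 : B `<=` A -> B g0 ->
  (forall g, A g -> dotv c g <= dotv c g0) ->
  (forall g, A g -> dotv c g = dotv c g0 -> B g) ->
  face (conv A) c = face (conv B) c.
Proof.
move=> BA Bg0 AM AB; rewrite (face_conv_argmax (BA _ Bg0) AM).
rewrite (face_conv_argmax Bg0 (fun g Bg => AM g (BA g Bg))).
apply/seteqP; split=> x /= [Ax xM]; split=> //; last exact: conv_sub Ax.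
exact: conv_argmax_sub Bg0 AM AB _ Ax xM.
Qed.

End Convex.

Section Coordinates.
Context {R : realType} {n : nat}.
Implicit Types (c x : 'rV[R]_n) (S : {set 'I_n}) (s : 'S_n).

Lemma ev_entry (r i : 'I_n) : ev R r ord0 i = (i == r)%:R.
Proof. by rewrite /ev mxE eqxx. Qed.

Lemma rho_entry (i : 'I_n) : rho R n ord0 i = 2^-1.
Proof.
rewrite /rho summxE (bigD1 i) //= big1 ?addr0.
  by rewrite mxE ev_entry eqxx mulr1.
by move=> j /negbTE ji; rewrite mxE ev_entry eq_sym ji mulr0.
Qed.

Lemma vS_entry S i : vS R S ord0 i = (i \in S)%:R.
Proof.
rewrite /vS summxE; case: (boolP (i \in S)) => iS.
  rewrite (bigD1 i) //= big1 ?addr0 ?ev_entry ?eqxx // => j /andP[_ /negbTE ji].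
  by rewrite ev_entry eq_sym ji.
by rewrite big1 // => j jS; rewrite ev_entry; case: eqP => // ij; rewrite ij jS in iS.
Qed.

Lemma w_entry (i j k : 'I_n) : w R i j ord0 k = 2^-1 - (k == i)%:R - (k == j)%:R.
Proof. by rewrite /w !mxE rho_entry. Qed.

Lemma w_sym (i j : 'I_n) : w R i j = w R j i.
Proof. by apply/rowP => k; rewrite !w_entry addrAC. Qed.

Lemma dotv_vS c S : dotv c (vS R S) = \sum_(i in S) c ord0 i.
Proof.
rewrite /dotv [RHS]big_mkcond /=; apply: eq_bigr => i _.
by rewrite vS_entry; case: (i \in S); rewrite ?mulr1 ?mulr0.
Qed.

Lemma dotv_w c (i j : 'I_n) : i != j ->
  dotv c (w R i j) = 2^-1 * \sum_k c ord0 k - c ord0 i - c ord0 j.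
Proof.
move=> ij; rewrite /dotv.
under eq_bigr do rewrite w_entry !mulrBr.
rewrite !sumrB -big_distrl mulrC; congr (_ - _ - _).
  by rewrite (bigD1 i) //= eqxx mulr1 big1 ?addr0 // => k /negbTE ->; rewrite mulr0.
by rewrite (bigD1 j) //= eqxx mulr1 big1 ?addr0 // => k /negbTE ->; rewrite mulr0.
Qed.

Lemma permv_sum s k (l : 'I_k -> R) (p : 'I_k -> 'rV[R]_n) :
  permv s (\sum_i l i *: p i) = \sum_i l i *: permv s (p i).
Proof. by apply/rowP => j; rewrite !mxE !summxE; apply: eq_bigr => i _; rewrite !mxE. Qed.

Lemma permvK s : cancel (@permv R n s) (permv s^-1%g).
Proof. by move=> x; apply/rowP => j; rewrite !mxE permKV. Qed.

Lemma permvKV s : cancel (@permv R n s^-1%g) (permv s).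
Proof. by move=> x; apply/rowP => j; rewrite !mxE permK. Qed.

Lemma permv_vS s S : permv s (vS R S) = vS R (s @^-1: S).
Proof. by apply/rowP => j; rewrite mxE !vS_entry inE. Qed.

Lemma permv_w s (i j : 'I_n) : permv s (w R i j) = w R (s^-1%g i) (s^-1%g j).
Proof. by apply/rowP => k; rewrite mxE !w_entry !(canF_eq (permK s)). Qed.

Lemma dotv_permv s c x : dotv (permv s c) (permv s x) = dotv c x.
Proof.
rewrite /dotv (reindex_inj (@perm_inj _ s^-1%g)).
by apply: eq_bigr => i _; rewrite !mxE permKV.
Qed.

End Coordinates.

Section Permutations.
Context {R : realType} {n : nat}.
Implicit Types (A G P : set 'rV[R]_n) (c x : 'rV[R]_n) (s : 'S_n).

Lemma image_permv_id G : (forall s x, G x -> G (permv s x)) ->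
  forall s, permv s @` G = G.
Proof.
move=> Gperm s; apply/seteqP; split=> [_ [x Gx <-]|x Gx]; first exact: Gperm.
by exists (permv s^-1%g x); [apply: Gperm | rewrite permvKV].
Qed.

Lemma conv_permv s A : permv s @` conv A = conv (permv s @` A).
Proof.
apply/seteqP; split=> [_ [_ [k [l [p [Ap [l_ge0 [l1 ->]]]]]] <-]|].
  exists k, l, (fun i => permv s (p i)); rewrite permv_sum.
  by split=> [i|]; [exists (p i) | split].
move=> _ [k [l [p [Ap [l_ge0 [l1 ->]]]]]].
exists (\sum_i l i *: permv s^-1%g (p i)); last first.
  by rewrite permv_sum; apply: eq_bigr => i _; rewrite permvKV.
exists k, l, (fun i => permv s^-1%g (p i)); split=> [i|]; last by split.
by have [y Ay <-] := Ap i; rewrite permvK.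
Qed.

Lemma face_permv s P c : permv s @` face P c = face (permv s @` P) (permv s c).
Proof.
apply/seteqP; split=> [_ [x [Px xmax] <-]|x [[y Py <-] ymax]].
  split; first by exists x.
  by move=> _ [y Py <-]; rewrite !dotv_permv; apply: xmax.
exists y => //; split=> // z Pz; rewrite -(dotv_permv s c z) -(dotv_permv s c y).
by apply: ymax; exists z.
Qed.

Lemma exists_sorting_perm (f : 'I_n -> R) :
  exists s : 'S_n, {homo f \o s : i j / (i <= j)%N >-> i <= j}.
Proof.
pose le i j := f i <= f j.
have leT_total : total le by move=> i j; apply: le_total.
have leT_trans : transitive le by move=> j i k; apply: le_trans.
pose t := sort le (enum 'I_n).
have t_perm : perm_eq t (ord_tuple n) by rewrite val_ord_tuple perm_sort perm_refl.
have [s tE] := tuple_permP t_perm.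
have t_nth (k : 'I_n) : nth k t k = s k by rewrite tE -tnth_nth tnth_mktuple tnth_ord_tuple.
have size_t : size t = n by rewrite size_sort size_enum_ord.
exists s => i j ij /=; rewrite -t_nth -(t_nth j) [nth j t j](set_nth_default i) ?size_t //.
have t_sorted : sorted le t by exact: sort_sorted.
have leT_refl : reflexive le by move=> k; apply: lexx.
by apply: (sorted_leq_nth leT_trans leT_refl i t_sorted); rewrite ?inE ?size_t.
Qed.

End Permutations.

Section FinsetSums.
Context {T : finType} {R : realFieldType}.
Implicit Types (A S X : {set T}) (f : T -> R).

Lemma exists_subset_card A k : (k <= #|A|)%N -> exists2 S : {set T}, S \subset A & #|S| = k.
Proof.
case/card_geqP => s [s_uniq size_s sA]; exists [set x in s].
  by apply/fintype.subsetP => x; rewrite inE => /sA.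
by rewrite cardsE (card_uniqP s_uniq).
Qed.

Lemma card_swap {S r j} : r \in S -> j \notin S -> #|j |: (S :\ r)| = #|S|.
Proof. by move=> rS jS; rewrite cardsU1 !inE negb_and jS orbT (cardsD1 r S) rS. Qed.

Lemma sum_swap {f S r j} : r \in S -> j \notin S ->
  \sum_(i in j |: (S :\ r)) f i = \sum_(i in S) f i - f r + f j.
Proof.
by move=> rS jS; rewrite big_setU1 ?inE ?negb_and ?jS ?orbT //= (big_setD1 r rS) /=; lra.
Qed.

(* If no half-size subset of [X] carries more than half of the total, then
   complementary halves carry exactly half each, and exchanging one element
   between them shows that [f] is constant on [X]. *)
Lemma eq_of_half_sums f X k : #|X| = k.*2 ->
  (forall S, S \subset X -> #|S| = k -> 2 * \sum_(i in S) f i <= \sum_(i in X) f i) ->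
  {in X &, forall a b, f a = f b}.
Proof.
move=> cardX half_le.
have half_eq S : S \subset X -> #|S| = k -> 2 * \sum_(i in S) f i = \sum_(i in X) f i.
  move=> SX cardS; have cardXS : #|X :\: S| = k.
    by rewrite cardsD (finset.setIidPr SX) cardS cardX -addnn addnK.
  have := half_le _ (finset.subsetDl X S) cardXS; have := half_le _ SX cardS.
  by rewrite [\sum_(i in X) _](big_setID S) /= (finset.setIidPr SX); lra.
move=> a b aX bX; have [->//|ab] := eqVneq a b.
have cardXab : #|X :\ a :\ b| = k.*2.-2.
  by rewrite -cardX (cardsD1 a X) (cardsD1 b (X :\ a)) aX !inE eq_sym ab bX.
have [S SX cardS] := @exists_subset_card (X :\ a :\ b) k.-1 ltac:(rewrite cardXab; lia).
have [aS bS] : a \notin S /\ b \notin S.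
  by split; apply/negP => /(fintype.subsetP SX); rewrite !inE ?eqxx ?andbF.
have k_gt0 : (0 < k)%N.
  by rewrite -double_gt0 -cardX (cardsD1 a X) aX.
have addS x : x \in X -> x \notin S -> 2 * (f x + \sum_(i in S) f i) = \sum_(i in X) f i.
  move=> xX xS; rewrite -(big_setU1 _ xS) half_eq //; last first.
    by rewrite cardsU1 xS cardS add1n prednK.
  rewrite finset.subUset finset.sub1set xX (fintype.subset_trans SX) //.
  by rewrite (fintype.subset_trans (finset.subD1set _ b)) ?finset.subD1set.
by have := addS a aX aS; have := addS b bX bS; lra.
Qed.

Lemma card_perm_preimset (s : {perm T}) S : #|s @^-1: S| = #|S|.
Proof. by rewrite card_preimset //; apply: perm_inj. Qed.

End FinsetSums.

Lemma exists_notin_geq n k (S : {set 'I_n.+1}) : (k + #|S| <= n)%N ->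
  exists2 j : 'I_n.+1, j \notin S & (k <= j)%N.
Proof.
move=> small; pose X := S :|: [set inord i | i : 'I_k].
have : (#|X| < #|'I_n.+1|)%N.
  rewrite card_ord ltnS (leq_trans (leq_card_setU _ _)) // addnC.
  by rewrite (leq_trans _ small) // leq_add2r (leq_trans (leq_imset_card _ _)) ?card_ord.
rewrite -(cardsC X) -{1}[#|X|]addn0 ltn_add2l => /card_gt0P [j].
rewrite !inE negb_or => /andP[jS jk].
exists j => //; rewrite leqNgt; apply: contra jk => lt_jk.
by apply/imsetP; exists (Ordinal lt_jk) => //; rewrite inord_val.
Qed.

Definition Pm_gen (R : realType) (m : nat) : set 'rV[R]_(N m) :=
  [set x | (exists S : {set 'I_(N m)}, #|S| = m.+1 /\ x = vS R S)
        \/ (exists i j : 'I_(N m), (i < j)%N /\ x = w R i j)].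

Definition PI_gen (R : realType) (m : nat) : set 'rV[R]_(N m) :=
  [set x | exists S : {set 'I_(N m)}, #|S| = m.+1 /\ x = vS R S].

Definition PII_gen (R : realType) (m : nat) : set 'rV[R]_(N m) :=
  [set x | (exists S : {set 'I_(N m)}, #|S| = m.+1 /\
              (forall r, r \in S -> (1 <= r)%N) /\ x = vS R S)
        \/ (exists j : 'I_(N m), (1 <= j)%N /\ x = w R (idx m 0) j)].

Definition PIII_gen (R : realType) (m : nat) : set 'rV[R]_(N m) :=
  [set x | (exists S : {set 'I_(N m)}, #|S| = m.+1 /\
              (forall r, r \in S -> (3 <= r)%N) /\ x = vS R S)
        \/ (exists i j : 'I_(N m), (i < j)%N /\ (j <= 2)%N /\ x = w R i j)].

Section Polytopes.
Context {R : realType} {m : nat}.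
Implicit Types (x : 'rV[R]_(N m)) (s : 'S_(N m)).

Lemma PmE : Pm R m = conv (Pm_gen R m). Proof. by []. Qed.
Lemma PIE : PI R m = conv (PI_gen R m). Proof. by []. Qed.
Lemma PIIE : PII R m = conv (PII_gen R m). Proof. by []. Qed.
Lemma PIIIE : PIII R m = conv (PIII_gen R m). Proof. by []. Qed.

Lemma idx_val k : (k < N m)%N -> idx m k = k :> nat.
Proof. exact: inordK. Qed.

Lemma idx_small k : (k <= 5)%N -> idx m k = k :> nat.
Proof. by move=> k5; rewrite idx_val // /N; lia. Qed.

Lemma Pm_gen_w {i j : 'I_(N m)} : i != j -> Pm_gen R m (w R i j).
Proof.
move=> ij; right; case: (ltngtP i j) => [lt_ij|lt_ji|/val_inj eq_ij].
- by exists i, j.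
- by exists j, i; rewrite w_sym.
- by rewrite eq_ij eqxx in ij.
Qed.

Lemma Pm_permv s : permv s @` Pm R m = Pm R m.
Proof.
rewrite PmE conv_permv image_permv_id // => {}s _ [[S [cardS ->]]|[i [j [ij ->]]]].
  by left; exists (s @^-1: S); rewrite permv_vS card_perm_preimset.
by rewrite permv_w; apply: Pm_gen_w; rewrite (inj_eq perm_inj) neq_ltn ij.
Qed.

Lemma PI_permv s : permv s @` PI R m = PI R m.
Proof.
rewrite PIE conv_permv image_permv_id // => {}s _ [S [cardS ->]].
by exists (s @^-1: S); rewrite permv_vS card_perm_preimset.
Qed.

Lemma half_N : 2^-1 * (N m)%:R = m.+1%:R + 2 :> R.
Proof.
have -> : N m = (m.+1 + 2).*2 by rewrite /N; lia.
by rewrite -mul2n natrM mulrA mulVf ?mul1r ?pnatr_eq0 // natrD.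
Qed.

Lemma sum_Pm x : Pm R m x -> \sum_j x ord0 j = m.+1%:R.
Proof.
have -> : \sum_j x ord0 j = dotv (const_mx 1) x.
  by apply: eq_bigr => j _; rewrite mxE mul1r.
rewrite PmE; apply: conv_eq => _ [[S [cardS ->]]|[i [j [ij ->]]]].
  by rewrite dotv_vS (eq_bigr (fun _ => 1)) => [|i _]; rewrite ?mxE // sumr_const cardS.
rewrite dotv_w ?neq_ltn ?ij // !mxE (eq_bigr (fun _ => 1)) => [|k _]; last by rewrite mxE.
by rewrite sumr_const card_ord -[_ *+ _]mulr_natr mul1r half_N; lra.
Qed.

End Polytopes.

Definition first4 (m : nat) : {set 'I_(N m)} := [set idx m k | k : 'I_4].

Section SmallIndices.
Context {m : nat}.

Lemma idx_eq k l : (k <= 5)%N -> (l <= 5)%N -> (idx m k == idx m l) = (k == l).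
Proof. by move=> k5 l5; rewrite -(inj_eq val_inj) /= !idx_small. Qed.

Lemma idx01_neq : idx m 0 != idx m 1.
Proof. by rewrite idx_eq. Qed.

Lemma ord4_le5 (k : 'I_4) : (k <= 5)%N.
Proof. by apply: leq_trans (ltnW (ltn_ord k)) _. Qed.

Lemma mem_first4 (j : 'I_(N m)) : (j \in first4 m) = (j < 4)%N.
Proof.
apply/imsetP/idP => [[k _ ->]|j4]; first by rewrite idx_small ?ord4_le5.
by exists (Ordinal j4) => //; apply: val_inj; rewrite /= idx_small ?(ord4_le5 (Ordinal j4)).
Qed.

Lemma idx_first4_inj : injective (fun k : 'I_4 => idx m k).
Proof. by move=> a b /eqP; rewrite idx_eq ?ord4_le5 // => /eqP/val_inj. Qed.

Lemma card_first4 : #|first4 m| = 4.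
Proof. by rewrite card_imset ?card_ord //; apply: idx_first4_inj. Qed.

Lemma sum_first4 {R : realType} (x : 'rV[R]_(N m)) : \sum_(j in first4 m) x ord0 j =
  x ord0 (idx m 0) + x ord0 (idx m 1) + x ord0 (idx m 2) + x ord0 (idx m 3).
Proof.
rewrite big_imset /=; last by move=> a b _ _; apply: idx_first4_inj.
by rewrite big_mkcond /= !big_ord_recr big_ord0 /= add0r.
Qed.

End SmallIndices.

Section SortedFunctional.
Context {R : realType} {m : nat}.
Variable c : 'rV[R]_(N m).
Hypothesis c_sorted : {homo c ord0 : i j / (i <= j)%N >-> i <= j}.

Local Notation ck k := (c ord0 (idx m k)).
Local Notation W := (dotv c (w R (idx m 0) (idx m 1))).

Lemma ck_le k (j : 'I_(N m)) : (k <= j)%N -> ck k <= c ord0 j.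
Proof. by move=> kj; apply: c_sorted; rewrite idx_val // (leq_ltn_trans kj). Qed.

Lemma le_ck k (j : 'I_(N m)) : (j <= k)%N -> (k <= 5)%N -> c ord0 j <= ck k.
Proof. by move=> jk k5; apply: c_sorted; rewrite idx_small. Qed.

Lemma dotv_wE (i j : 'I_(N m)) : i != j ->
  dotv c (w R i j) = W + (ck 0 + ck 1) - (c ord0 i + c ord0 j).
Proof. by move=> ij; rewrite !dotv_w ?idx01_neq //; lra. Qed.

Lemma dotv_w_le {i j : 'I_(N m)} : (i < j)%N -> dotv c (w R i j) <= W.
Proof.
move=> ij; rewrite dotv_wE ?neq_ltn ?ij //.
by have := ck_le 0 i isT; have := ck_le 1 j (leq_ltn_trans (leq0n i) ij); lra.
Qed.

Lemma face_Pm_PI : (exists S : {set 'I_(N m)}, #|S| = m.+1 /\ W < dotv c (vS R S)) ->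
  face (Pm R m) c = face (PI R m) c.
Proof.
case=> S0 [cardS0 ltW].
have [Sx /eqP cardSx Sxmax] := @arg_maxP _ _ _ S0 (fun S => #|S| == m.+1)
  (fun S => dotv c (vS R S)) (introT eqP cardS0).
have Sx_gtW : W < dotv c (vS R Sx) by apply: lt_le_trans ltW (Sxmax _ _); apply/eqP.
rewrite PmE PIE; apply: (face_conv_sub (vS R Sx)).
- by move=> _ [S [cardS ->]]; left; exists S.
- by exists Sx.
- move=> _ [[S [cardS ->]]|[i [j [ij ->]]]]; first by apply: Sxmax; apply/eqP.
  by have := dotv_w_le ij; lra.
- move=> _ [[S [cardS ->]]|[i [j [ij ->]]]] eqmax; first by exists S.
  by have := dotv_w_le ij; lra.
Qed.

Section VerticesBelowW.
Hypothesis vS_le : forall S : {set 'I_(N m)}, #|S| = m.+1 -> dotv c (vS R S) <= W.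

Lemma Pm_gen_le g : Pm_gen R m g -> dotv c g <= W.
Proof. by case=> [[S [cardS ->]]|[i [j [ij ->]]]]; [apply: vS_le | apply: dotv_w_le]. Qed.

(* Exchanging [r] for a coordinate [j >= k] outside [S] cannot increase the value. *)
Lemma vS_argmax_ge {S : {set 'I_(N m)}} {r} k :
  #|S| = m.+1 -> dotv c (vS R S) = W -> r \in S -> (k <= 4)%N -> ck k <= c ord0 r.
Proof.
move=> cardS SW rS k4.
have [j jS kj] := @exists_notin_geq (m.*2 + 5) k S ltac:(rewrite cardS; lia).
have := vS_le _ (etrans (card_swap rS jS) cardS).
rewrite !dotv_vS sum_swap // -dotv_vS SW.
by have := ck_le k j kj; lra.
Qed.

Lemma face_Pm_PII : ck 0 < ck 2 -> face (Pm R m) c = face (PII R m) c.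
Proof.
move=> lt02; rewrite PmE PIIE; apply: (face_conv_sub (w R (idx m 0) (idx m 1))).
- move=> _ [[S [cardS [_ ->]]]|[j [j_ge1 ->]]]; first by left; exists S.
  by apply: Pm_gen_w; move: j_ge1; apply: contraTneq => <-; rewrite idx_small.
- by right; exists (idx m 1); rewrite idx_small.
- exact: Pm_gen_le.
- move=> _ [[S [cardS ->]]|[i [j [ij ->]]]] maxW.
    left; exists S; split=> //; split=> // r rS; rewrite lt0n.
    move: (vS_argmax_ge 2 cardS maxW rS isT); apply: contraTneq => r0.
    by rewrite -ltNge (_ : r = idx m 0) //; apply: val_inj; rewrite /= r0 idx_small.
  have i0 : i = idx m 0.
    apply: val_inj; rewrite /= idx_small //; apply/eqP; rewrite -leqn0 leqNgt.
    apply/negP => i_gt0; move: maxW; rewrite dotv_wE ?neq_ltn ?ij //.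
    by have := ck_le 1 i i_gt0; have := ck_le 2 j (leq_ltn_trans i_gt0 ij); lra.
  by right; exists j; rewrite -i0 (leq_trans _ ij).
Qed.

Lemma face_Pm_PIII : ck 0 = ck 2 -> ck 0 < ck 3 -> face (Pm R m) c = face (PIII R m) c.
Proof.
move=> eq02 lt03; have eq01 : ck 1 = ck 0.
  by apply/le_anti/andP; split; [rewrite eq02|]; apply: ck_le; rewrite idx_small.
rewrite PmE PIIIE; apply: (face_conv_sub (w R (idx m 0) (idx m 1))).
- move=> _ [[S [cardS [_ ->]]]|[i [j [ij [_ ->]]]]]; first by left; exists S.
  by right; exists i, j.
- by right; exists (idx m 0), (idx m 1); rewrite !idx_small.
- exact: Pm_gen_le.
- move=> _ [[S [cardS ->]]|[i [j [ij ->]]]] maxW.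
    left; exists S; split=> //; split=> // r rS; rewrite leqNgt; apply/negP => r_lt3.
    have := vS_argmax_ge 3 cardS maxW rS isT; have := le_ck 2 r r_lt3 isT; lra.
  right; exists i, j; do 2!split => //; rewrite leqNgt; apply/negP => j_gt2.
  move: maxW; rewrite dotv_wE ?neq_ltn ?ij //.
  by have := ck_le 0 i isT; have := ck_le 3 j j_gt2; lra.
Qed.

Section FourLowestEqual.
Hypothesis eq03 : ck 0 = ck 3.

Lemma c_first4 j : j \in first4 m -> c ord0 j = ck 0.
Proof. by rewrite mem_first4 => j4; apply/le_anti; rewrite ck_le // eq03 le_ck. Qed.

(* Every half of the [2m + 2] remaining coordinates carries at most [W], and
   [2 W] is their total, so [eq_of_half_sums] applies. *)
Lemma c_notin_first4 j : j \notin first4 m -> c ord0 j = ck 4.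
Proof.
have cardX : #|~: first4 m| = m.+1.*2.
  by have := cardsC (first4 m); rewrite card_first4 card_ord /N; lia.
have sum_c_first4 : \sum_(i in first4 m) c ord0 i = 4%:R * ck 0.
  by rewrite (eq_bigr _ c_first4) sumr_const card_first4 mulr_natl.
have W2 : 2 * W = \sum_(i in ~: first4 m) c ord0 i.
  rewrite dotv_w ?idx01_neq // (c_first4 (idx m 1)) ?mem_first4 ?idx_small //.
  rewrite (bigID (mem (first4 m))) /= sum_c_first4.
  by rewrite (eq_bigl (mem (~: first4 m))) => [|i]; rewrite ?inE //; lra.
move=> jX; apply: (eq_of_half_sums (c ord0) _ _ cardX) => [S SX cardS||].
- by rewrite -dotv_vS -W2 ler_pM2l ?vS_le.
- by rewrite inE.
- by rewrite inE mem_first4 idx_small.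
Qed.

Lemma dotv_first4 x : dotv c x =
  ck 4 * \sum_j x ord0 j + (ck 0 - ck 4) * \sum_(j in first4 m) x ord0 j.
Proof.
rewrite /dotv (bigID (mem (first4 m))) /=.
rewrite (eq_bigr (fun j => ck 0 * x ord0 j)) => [|j /c_first4 -> //].
rewrite [X in _ + X](eq_bigr (fun j => ck 4 * x ord0 j)) => [|j /c_notin_first4 -> //].
by rewrite -!big_distrr /= [\sum_j x ord0 j](bigID (mem (first4 m))) /=; ring.
Qed.

Lemma face_Pm_F0 : face (Pm R m) c = F0 R m \/ face (Pm R m) c = Pm R m.
Proof.
have w01_Pm : Pm R m (w R (idx m 0) (idx m 1)) by apply/conv_self/Pm_gen_w/idx01_neq.
have W_val : W = ck 4 * m.+1%:R.
  rewrite dotv_first4 sum_Pm // sum_first4 !w_entry !idx_eq //=; lra.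
have dotv_Pm x : Pm R m x -> dotv c x = W + (ck 0 - ck 4) * \sum_(j in first4 m) x ord0 j.
  by move=> Px; rewrite dotv_first4 sum_Pm // W_val mulrC.
rewrite PmE (face_conv_argmax (Pm_gen_w idx01_neq) Pm_gen_le) -PmE.
have [e04|n04] := eqVneq (ck 0) (ck 4); [right|left]; apply/seteqP; split=> x /=.
- by case.
- by move=> Px; split; rewrite // dotv_Pm // e04 subrr mul0r addr0.
- move=> [Px]; rewrite dotv_Pm // -[RHS]addr0 => /addrI /eqP.
  by rewrite mulf_eq0 subr_eq0 (negbTE n04) sum_first4 => /eqP.
- by move=> [Px x0]; split; rewrite // dotv_Pm // sum_first4 x0 mulr0 addr0.
Qed.

End FourLowestEqual.

End VerticesBelowW.

Lemma face_Pm_sorted :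
  [\/ face (Pm R m) c = face (PI R m) c, face (Pm R m) c = face (PII R m) c,
      face (Pm R m) c = face (PIII R m) c
    | face (Pm R m) c = F0 R m \/ face (Pm R m) c = Pm R m].
Proof.
have [[S [cardS ltW]]|noS] :=
  pselect (exists S : {set 'I_(N m)}, #|S| = m.+1 /\ W < dotv c (vS R S)).
  by constructor 1; apply: face_Pm_PI; exists S.
have vS_le (S : {set 'I_(N m)}) : #|S| = m.+1 -> dotv c (vS R S) <= W.
  by move=> cardS; rewrite leNgt; apply/negP => ltW; apply: noS; exists S.
have [lt02|ge02] := ltrP (ck 0) (ck 2); first by constructor 2; apply: face_Pm_PII.
have eq02 : ck 0 = ck 2 by apply/le_anti; rewrite ge02 ck_le ?idx_small.
have [lt03|ge03] := ltrP (ck 0) (ck 3); first by constructor 3; apply: face_Pm_PIII.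
have eq03 : ck 0 = ck 3 by apply/le_anti; rewrite ge03 ck_le ?idx_small.
by constructor 4; apply: face_Pm_F0.
Qed.

End SortedFunctional.

Theorem lemma5p12 (R : realType) (m : nat) (F : set 'rV[R]_(N m)) :
  is_face (Pm R m) F ->
  F <> Pm R m ->
  (forall s : 'S_(N m), F <> permv s @` F0 R m) ->
  is_face (PI R m) F \/
  exists s : 'S_(N m),
    is_face (permv s @` PII R m) F \/ is_face (permv s @` PIII R m) F.
Proof.
move=> [c Fc]; have [p c_sorted] := exists_sorting_perm (c ord0).
set c' := permv p c.
have c'_sorted : {homo c' ord0 : i j / (i <= j)%N >-> i <= j}.
  by move=> i j ij; rewrite !mxE; apply: c_sorted.
have {Fc}-> : F = permv p^-1%g @` face (Pm R m) c'.
  by rewrite Fc face_permv Pm_permv permvK.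
case: (face_Pm_sorted _ c'_sorted) => [||| [] ] -> FneP FneF0.
- by left; exists (permv p^-1%g c'); rewrite face_permv PI_permv.
- by right; exists p^-1%g; left; exists (permv p^-1%g c'); rewrite face_permv.
- by right; exists p^-1%g; right; exists (permv p^-1%g c'); rewrite face_permv.
- by case: (FneF0 p^-1%g).
- by case: FneP; rewrite Pm_permv.
Qed.
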